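(* Let $G$ be a finite group and let $k$ be the core of $|F(G)|$. Then for every $i \geq 0$, \[ \nu_{i+1}(G) = [F(G), \nu_i(G)]\, \nu_i(G)^k , \] where $\nu_i(G)^k$ denotes the subgroup generated by all $k$-th powers of elements of $\nu_i(G)$.
   Context: For a finite group $G$, $F(G)$ denotes its Fitting subgroup (the largest nilpotent normal subgroup). The $F$-central series of $G$ is defined by $\nu_0(G)=F(G)$ and, for $i\ge 0$, $\nu_{i+1}(G)$ is the smallest normal subgroup $N$ of $F(G)$ with $N\le \nu_i(G)$ such that $\nu_i(G)/N$ is centralized by $F(G)$ and is a direct product of elementary abelian groups. The core of a positive integer $n=p_1^{e_1}\cdots p_r^{e_r}$ (distinct primes $p_j$, all $e_j\ge 1$) is $p_1\cdots p_r$. *)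

From HB Require Import structures.
From mathcomp Require Import all_boot all_fingroup all_solvable.
Set Implicit Arguments. Unset Strict Implicit. Unset Printing Implicit Defensive.
Local Open Scope group_scope.

Definition core (n : nat) : nat := (\prod_(p <- primes n) p)%N.

Definition elem_dprod (hT : finGroupType) (Q : {set hT}) : Prop :=
  exists s : seq {group hT},
    \big[dprod/1]_(H <- s) (H : {set hT}) = Q /\
    (forall H, H \in s -> exists2 p, prime p & p.-abelem H).

Definition Fstep_ok (gT : finGroupType) (G M N : {group gT}) : Prop :=
  [/\ N <| 'F(G), N \subset M,
      M / N \subset 'C('F(G) / N) & elem_dprod (M / N)].

Definition Fcentral_series (gT : finGroupType) (G : {group gT})
    (nu : nat -> {group gT}) : Prop :=
  nu 0 = 'F(G) :> {set gT} /\
  forall i, Fstep_ok G (nu i) (nu i.+1) /\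
    (forall N : {group gT}, Fstep_ok G (nu i) N -> nu i.+1 \subset N).

From HB Require Import structures.
From mathcomp Require Import all_boot all_fingroup all_solvable.
Set Implicit Arguments. Unset Strict Implicit. Unset Printing Implicit Defensive.

(* Let F = F(G) and k = core |F|.  For a normal subgroup M of F, a normal
   subgroup N <= M of F is an admissible step below M exactly when
     (a) M/N is centralized by F/N, i.e. [F, M] <= N, and
     (b) M/N is a direct product of elementary abelian groups.
   Once (a) holds, M/N is abelian, and an abelian group is such a direct
   product iff its exponent divides the core of |F| (its Sylow subgroups are
   then elementary abelian, and conversely every prime in play divides |F|);
   this exponent condition says that every k-th power of M lies in N.  Hence
   the admissible steps are exactly the normal subgroups of F containing
   D(M) = [F, M] <<M^k>>, and D(M) is itself admissible: it is the least one. *)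

Lemma prod_primes_gt0 (s : seq nat) : all prime s -> 0 < \prod_(q <- s) q.
Proof.
elim: s => [|q s IH] /=; first by rewrite big_nil.
by case/andP=> pq ps; rewrite big_cons muln_gt0 prime_gt0 // IH.
Qed.

Lemma logn_prod_primes (p : nat) (s : seq nat) : uniq s -> all prime s ->
  logn p (\prod_(q <- s) q) = (p \in s).
Proof.
elim: s => [|q s IH] /=; first by rewrite big_nil logn1.
case/andP=> qs us /andP[pq ps].
rewrite big_cons (lognM _ (prime_gt0 pq) (prod_primes_gt0 ps)).
rewrite (logn_prime _ pq) IH // in_cons.
by case: eqP => [->|_] /=; [rewrite (negbTE qs) | rewrite add0n].
Qed.

Lemma all_prime_primes (n : nat) : all prime (primes n).
Proof. by apply/allP => p; rewrite mem_primes => /andP[]. Qed.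

Lemma core_gt0 (n : nat) : 0 < core n.
Proof. exact: prod_primes_gt0 (all_prime_primes n). Qed.

Lemma logn_core (p n : nat) : logn p (core n) = (p \in primes n).
Proof. by rewrite logn_prod_primes ?primes_uniq ?all_prime_primes. Qed.

Lemma dvdn_core (p n : nat) : prime p -> 0 < n -> p %| n -> p %| core n.
Proof.
move=> pp n_gt0 pn; rewrite -(expn1 p) pfactor_dvdn ?core_gt0 // logn_core.
by rewrite mem_primes pp n_gt0 pn.
Qed.

(* Since core n is squarefree, a p-number dividing it divides p. *)
Lemma pnat_dvd_core (p m n : nat) : prime p -> p.-nat m -> m %| core n -> m %| p.
Proof.
move=> pp /p_natP[a ->]; rewrite pfactor_dvdn ?core_gt0 // logn_core => a_le.
by rewrite -{2}(expn1 p) dvdn_exp2l // (leq_trans a_le) //; case: (_ \in _).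
Qed.

Local Open Scope group_scope.

Section ElemDprod.
Variable hT : finGroupType.

(* An abelian group of exponent dividing core n is the direct product of its
   Sylow subgroups, and each of them has prime exponent. *)
Lemma abelian_elem_dprod (Q : {group hT}) (n : nat) :
  abelian Q -> exponent Q %| core n -> elem_dprod Q.
Proof.
move=> abQ expQ; exists [seq 'O_p(Q)%G | p : nat <- primes #|Q|]; split.
  by rewrite big_map; exact: nilpotent_Fitting (abelian_nil abQ).
move=> H /mapP[p]; rewrite mem_primes => /and3P[pp _ _] ->.
exists p => //; apply/abelemP => //; split.
  exact: abelianS (pcore_sub _ _) abQ.
move=> x Ox; apply/eqP; rewrite -order_dvdn.
apply: (@pnat_dvd_core p _ n) => //; first exact: mem_p_elt (pcore_pgroup _ _) Ox.
exact: dvdn_trans (dvdn_exponent (subsetP (pcore_sub p Q) x Ox)) expQ.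
Qed.

(* Conversely, in an abelian direct product of elementary abelian groups
   every element has order 1 or a prime dividing |Q|, hence dividing any
   positive multiple n of |Q|. *)
Lemma elem_dprod_exponent (Q : {group hT}) (n : nat) :
  abelian Q -> 0 < n -> #|Q| %| n -> elem_dprod Q -> exponent Q %| core n.
Proof.
move=> abQ n_gt0 Qn [s [defQ elem_s]].
have sHQ H : H \in s -> (H : {set hT}) \subset Q.
  move=> Hs; rewrite -(bigdprodWY defQ) bigcup_seq sub_gen //.
  exact: (bigcup_sup H).
rewrite -(bigdprodWY defQ) abelian_exponent_gen; last first.
  by apply: abelianS abQ; rewrite bigcup_seq; apply/bigcupsP.
apply/exponentP => x; rewrite bigcup_seq => /bigcupP[H Hs xH].
have [p pp /abelemP[] // _ expH] := elem_s H Hs.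
apply/eqP; rewrite -order_dvdn.
have [-> | x_nt] := eqVneq #[x] 1%N; first exact: dvd1n.
have ox : #[x] = p by apply/(prime_nt_dvdP pp x_nt); rewrite order_dvdn expH.
rewrite ox dvdn_core // -ox; apply: dvdn_trans Qn.
exact: order_dvdG (subsetP (sHQ H Hs) x xH).
Qed.

End ElemDprod.

Definition powers (gT : finGroupType) (m : nat) (A : {set gT}) : {set gT} :=
  [set x ^+ m | x in A].

Section Powers.
Variables (gT : finGroupType) (m : nat).

Lemma powers_sub (M : {group gT}) : powers m M \subset M.
Proof. by apply/subsetP => y /imsetP[x Mx ->]; apply: groupX. Qed.

(* Taking powers commutes with conjugation, so it preserves normality. *)
Lemma norm_powers (M : {group gT}) (A : {set gT}) :
  A \subset 'N(M) -> A \subset 'N(powers m M).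
Proof.
move=> nMA; apply/subsetP => y Ay; rewrite inE; apply/subsetP => z.
rewrite mem_conjg => /imsetP[x Mx ez].
have -> : z = (x ^ y) ^+ m by rewrite -conjXg -ez conjgKV.
by apply: imset_f; rewrite memJ_norm // (subsetP nMA).
Qed.

Lemma quotient_exponent_powers (M N : {group gT}) :
  M \subset 'N(N) -> (exponent (M / N) %| m) = (powers m M \subset N).
Proof.
move=> nNM; apply/exponentP/subsetP => [expQ _ /imsetP[y My ->] | sPN].
  have Ny := subsetP nNM y My.
  by apply: coset_idr; rewrite ?groupX // morphX // expQ ?mem_quotient.
move=> _ /morphimP[y Ny My ->]; rewrite -morphX //; apply: coset_id.
exact/sPN/imset_f.
Qed.

End Powers.

(* Admissibility of N below M with an arbitrary group H in place of F(G);
   [Fstep_ok G M N] is by definition [step_ok 'F(G) M N]. *)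
Definition step_ok (gT : finGroupType) (H M N : {group gT}) : Prop :=
  [/\ N <| H, N \subset M, M / N \subset 'C(H / N) & elem_dprod (M / N)].

Section Step.
Variables (gT : finGroupType) (H M : {group gT}).
Hypothesis nsMH : M <| H.
Local Notation k := (core #|H|).

Definition next_term : {group gT} := ([~: H, M] <*> <<powers k M>>)%G.

Let sMH : M \subset H := normal_sub nsMH.
Let nMH : H \subset 'N(M) := normal_norm nsMH.
Let sPM : <<powers k M>> \subset M.
Proof. by rewrite gen_subG powers_sub. Qed.
Let nRH : H \subset 'N([~: H, M]).
Proof. exact: normsR (normG _) nMH. Qed.
Let nPH : H \subset 'N(<<powers k M>>).
Proof. by rewrite norms_gen ?norm_powers. Qed.

(* Both factors are normal in H, so their join is their product. *)
Lemma next_termE : next_term :=: [~: H, M] * <<powers k M>>.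
Proof. by rewrite /= norm_joinEr // (subset_trans sPM (subset_trans sMH nRH)). Qed.

Lemma next_term_sub : next_term \subset M.
Proof. by rewrite next_termE mul_subG ?commg_subr. Qed.

Lemma next_term_normal : next_term <| H.
Proof. by rewrite /normal (subset_trans next_term_sub sMH) next_termE normsM. Qed.

Lemma step_okP (N : {group gT}) :
  N <| H -> N \subset M ->
  step_ok H M N <-> ([~: H, M] \subset N /\ powers k M \subset N).
Proof.
move=> nsNH sNM; have nNH := normal_norm nsNH.
have nNM := subset_trans sMH nNH.
rewrite /step_ok nsNH sNM -(quotient_cents2 nNH nNM) centsC.
split=> [[_ _ cHM elemQ] | [cHM sPN]]; split=> //.
  have abQ : abelian (M / N) := subset_trans (quotientS _ sMH) cHM.
  rewrite -quotient_exponent_powers //.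
  apply: elem_dprod_exponent elemQ => //.
  exact: dvdn_trans (dvdn_quotient _ _) (cardSg sMH).
apply: (abelian_elem_dprod (n := #|H|)); last by rewrite quotient_exponent_powers.
exact: subset_trans (quotientS _ sMH) cHM.
Qed.

Lemma next_term_ok : step_ok H M next_term.
Proof.
apply/step_okP; [exact: next_term_normal | exact: next_term_sub |].
by split; [exact: joing_subl | exact: subset_trans (subset_gen _) (joing_subr _ _)].
Qed.

Lemma next_term_min (N : {group gT}) : step_ok H M N -> next_term \subset N.
Proof.
move=> okN; have [nsNH sNM _ _] := okN.
have [cHM sPN] := (step_okP nsNH sNM).1 okN.
by rewrite join_subG cHM gen_subG.
Qed.

Lemma least_step_eq (N : {group gT}) :
  step_ok H M N -> (forall L : {group gT}, step_ok H M L -> N \subset L) ->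
  N :=: next_term.
Proof.
move=> okN minN; apply/eqP; rewrite eqEsubset next_term_min // andbT.
exact: minN next_term_ok.
Qed.

End Step.

Fixpoint Fseries (gT : finGroupType) (G : {group gT}) (i : nat) : {group gT} :=
  if i is j.+1 then next_term 'F(G) (Fseries G j) else 'F(G)%G.

Lemma Fseries_normal (gT : finGroupType) (G : {group gT}) (i : nat) :
  Fseries G i <| 'F(G).
Proof. by elim: i => [|i IH] /=; [exact: normal_refl | exact: next_term_normal]. Qed.

Theorem lemma2p1 (gT : finGroupType) (G : {group gT}) :
  (exists nu : nat -> {group gT}, Fcentral_series G nu) /\
  forall nu : nat -> {group gT}, Fcentral_series G nu ->
    forall i : nat,
      (nu i.+1 : {set gT}) =
        [~: 'F(G), nu i] * <<[set x ^+ core #|'F(G)| | x in nu i]>>.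
Proof.
split.
  exists (Fseries G); split=> // i.
  have nsFi := Fseries_normal G i.
  by split=> [|N]; [exact: next_term_ok nsFi | exact: (next_term_min nsFi)].
move=> nu [nu0 nu_step].
have nsNuF i : nu i <| 'F(G).
  by case: i => [|i]; [rewrite nu0 normal_refl | case: (nu_step i) => -[]].
move=> i; have [ok_i min_i] := nu_step i.
by rewrite (least_step_eq (nsNuF i) ok_i min_i) next_termE.
Qed.
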